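(* Let $n>0$ be the total computational load and let $p_0,\dots,p_{k-1}$ be $k$ processing units (PUs), each with a speed $c_s(p_i)>0$ and a memory capacity $m_{cap}(p_i)>0$. Run the following greedy procedure. First sort the PUs so that $c_s(p_0)/m_{cap}(p_0)\ge c_s(p_1)/m_{cap}(p_1)\ge\dots\ge c_s(p_{k-1})/m_{cap}(p_{k-1})$. Initialize $\mathrm{jLoad}\gets n$ and $\mathrm{jSpeed}\gets C_s=\sum_{i=0}^{k-1}c_s(p_i)$. Then for $i=0,1,\dots,k-1$ in order: - compute $\mathrm{desW}(b_i)=c_s(p_i)\cdot \mathrm{jLoad}/\mathrm{jSpeed}$; - if $\mathrm{desW}(b_i)>m_{cap}(p_i)$, set $tw(b_i)\gets m_{cap}(p_i)$ and call $p_i$ saturated; otherwise set $tw(b_i)\gets \mathrm{desW}(b_i)$ and call $p_i$ non-saturated; - update $\mathrm{jLoad}\gets\mathrm{jLoad}-tw(b_i)$ and $\mathrm{jSpeed}\gets\mathrm{jSpeed}-c_s(p_i)$. Then no saturated PU appears after a non-saturated PU in the sorted sequence. That is, if $p_i$ is non-saturated, then every $p_j$ with $j>i$ is also non-saturated.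
   Context: This procedure computes target block weights $tw(b_i)$ for distributing an application graph with $n$ unit-weight vertices over heterogeneous PUs. Block $b_i$ is assigned to PU $p_i$. *)

From mathcomp Require Import all_boot all_order all_algebra.
Set Implicit Arguments. Unset Strict Implicit. Unset Printing Implicit Defensive.
Import Order.TTheory GRing.Theory Num.Theory.
Local Open Scope ring_scope.

Section Greedy.
Variable R : realFieldType.
(* k PUs indexed 0..k-1 (already in sorted order), speeds cs, capacities mcap,
   total load n (number of unit-weight vertices). *)
Variables (k n : nat) (cs mcap : nat -> R).

(* state i = (jLoad, jSpeed) at the start of iteration i *)
Fixpoint greedy_state (i : nat) : R * R :=
  match i with
  | 0%N => (n%:R, \sum_(j < k) cs j)
  | i'.+1 =>
      let '(L, Sp) := greedy_state i' in
      let d := cs i' * L / Sp in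
      (L - (if mcap i' < d then mcap i' else d), Sp - cs i')
  end.

Definition desW (i : nat) : R := cs i * (greedy_state i).1 / (greedy_state i).2.

Definition tw (i : nat) : R := if mcap i < desW i then mcap i else desW i.

Definition saturated (i : nat) : bool := mcap i < desW i.
End Greedy.

From mathcomp Require Import all_boot all_order all_algebra.
From mathcomp Require Import ring.
Import Order.TTheory GRing.Theory Num.Theory.
Local Open Scope ring_scope.

(* The greedy procedure keeps the ratio jLoad / jSpeed unchanged whenever it
   assigns a PU its desired weight. So after a non-saturated PU p_i the next PU
   gets the desired weight c_s(p_(i+1)) * x with the same x, where
   c_s(p_i) * x <= m_cap(p_i); since m_cap / c_s is nondecreasing along the
   sequence, c_s(p_(i+1)) * x <= m_cap(p_(i+1)) and p_(i+1) is not saturated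
   either. *)

Lemma ler_mul_ratio (R : realFieldType) (c m c' m' x : R) :
  0 < c -> 0 < m -> 0 < c' -> 0 < m' -> c' / m' <= c / m ->
  c * x <= m -> c' * x <= m'.
Proof.
move=> c_gt0 m_gt0 c'_gt0 m'_gt0; rewrite ler_pdivrMr // mulrAC ler_pdivlMr // => hratio hcx.
rewrite -(ler_pM2l c_gt0) mulrCA (le_trans _ hratio) //.
by rewrite (ler_pM2l c'_gt0).
Qed.

Lemma divr_sub_proportional (R : fieldType) (L S c : R) :
  S != 0 -> S - c != 0 -> (L - c * L / S) / (S - c) = L / S.
Proof. by move=> S_neq0 Sc_neq0; field; apply/andP. Qed.

Section Greedy.
Variables (R : realFieldType) (k n : nat) (cs mcap : nat -> R).
Hypothesis cs_gt0 : forall i, (i < k)%N -> 0 < cs i.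

Local Notation state := (greedy_state k n cs mcap).

Definition load_per_speed (i : nat) : R := (state i).1 / (state i).2.

Lemma desWE i : desW k n cs mcap i = cs i * load_per_speed i.
Proof. by rewrite /desW mulrA. Qed.

Lemma greedy_speedE i : (i <= k)%N -> (state i).2 = \sum_(i <= j < k) cs j.
Proof.
elim: i => [_|i IH lt_ik]; first by rewrite big_mkord.
rewrite /= -/(state i); case: (state i) IH => L S /= ->; last exact: ltnW.
by rewrite big_ltn // addrC addKr.
Qed.

Lemma greedy_speed_gt0 i : (i < k)%N -> 0 < (state i).2.
Proof.
move=> lt_ik; rewrite greedy_speedE 1?ltnW // big_ltn // ltr_pwDl ?cs_gt0 //.
rewrite big_nat sumr_ge0 // => j /andP[_ lt_jk]; exact/ltW/cs_gt0.
Qed.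

Lemma load_per_speed_succ i : (i.+1 < k)%N -> ~~ saturated k n cs mcap i ->
  load_per_speed i.+1 = load_per_speed i.
Proof.
move=> lt_i1k; rewrite /saturated /load_per_speed /desW /=.
have := greedy_speed_gt0 i (ltnW lt_i1k); have := greedy_speed_gt0 i.+1 lt_i1k.
rewrite /= -/(state i); case: (state i) => L S /= Sc_gt0 S_gt0 /negbTE ->.
by rewrite divr_sub_proportional ?gt_eqF.
Qed.

Hypothesis mcap_gt0 : forall i, (i < k)%N -> 0 < mcap i.
Hypothesis ratio_nonincr :
  forall i j, (i <= j)%N -> (j < k)%N -> cs j / mcap j <= cs i / mcap i.

Lemma not_saturated_succ i : (i.+1 < k)%N ->
  ~~ saturated k n cs mcap i -> ~~ saturated k n cs mcap i.+1.
Proof.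
move=> lt_i1k nsat_i; move: (nsat_i).
rewrite /saturated !desWE load_per_speed_succ // -!leNgt.
apply: ler_mul_ratio; rewrite ?cs_gt0 ?mcap_gt0 ?(ltnW lt_i1k) //.
exact: ratio_nonincr.
Qed.

End Greedy.

Theorem lemma1 (R : realFieldType) (k n : nat) (cs mcap : nat -> R) :
  (0 < n)%N ->
  (forall i, (i < k)%N -> 0 < cs i) ->
  (forall i, (i < k)%N -> 0 < mcap i) ->
  (forall i j, (i <= j)%N -> (j < k)%N -> cs j / mcap j <= cs i / mcap i) ->
  forall i j, (i < j)%N -> (j < k)%N ->
    ~~ saturated k n cs mcap i -> ~~ saturated k n cs mcap j.
Proof.
move=> _ cs_gt0 mcap_gt0 ratio_nonincr i j + + nsat_i.
elim: j => // j IH; rewrite ltnS leq_eqVlt => /predU1P[<- | lt_ij] lt_j1k.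
  exact: not_saturated_succ.
by apply: not_saturated_succ => //; apply: IH => //; apply: ltnW.
Qed.
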